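(* Let $R$ be a commutative ring with identity, $n>1$, $S=M_n(R)$. If $A_1,A_2$ are vertices of the orthogonality graph $O(S)$ with $d(A_1,A_2)>3$, then $\operatorname{Ann}(\det A_1)=\operatorname{Ann}(\det A_2)$, and this ideal $I$ has no zero-divisors in the sense that $xy\ne0$ for all nonzero $x,y\in I$.
   Context: The orthogonality graph $O(S)$ of a ring $S$ is the undirected graph whose vertices are the nonzero two-sided zero-divisors of $S$, distinct vertices $x,y$ being adjacent iff $xy=yx=0$; $d$ is the graph distance. $\operatorname{Ann}(a)=\{x\in R: ax=0\}$. *)

From HB Require Import structures.
From mathcomp Require Import all_boot all_order all_algebra.
Set Implicit Arguments. Unset Strict Implicit. Unset Printing Implicit Defensive.
Import GRing.Theory.
Local Open Scope ring_scope.

Section OrthGraph.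
Variable S : pzRingType.

Definition two_sided_zdiv (x : S) : Prop :=
  (exists y : S, y != 0 /\ x * y = 0) /\ (exists z : S, z != 0 /\ z * x = 0).

Definition orth_vertex (x : S) : Prop := x != 0 /\ two_sided_zdiv x.

Definition orth_adj (x y : S) : Prop :=
  [/\ orth_vertex x, orth_vertex y, x != y, x * y = 0 & y * x = 0].

Fixpoint orth_walk (x : S) (s : seq S) (y : S) : Prop :=
  match s with
  | [::] => x = y
  | z :: s' => orth_adj x z /\ orth_walk z s' y
  end.

Definition orth_dist_le (x y : S) (k : nat) : Prop :=
  exists s : seq S, (size s <= k)%N /\ orth_walk x s y.
End OrthGraph.

Definition Ann (R : pzRingType) (a : R) : R -> Prop := fun x => a * x = 0.

(** A zero-divisor [x] of [det A] annihilates a nonzero matrix on both sides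
    of [A] (McCoy's theorem, with the annihilating matrix even a multiple of
    [x]): take the largest [t] such that [x] does not kill all [t]-minors of
    [A], border a [t]-minor not killed by [x] to a [t+1]-minor [P], and spread
    [x * adj P] over the rows and columns of [P].  Laplace expansion shows that
    the result is killed by [A] on both sides, and its entry at the bordering
    position is [x] times the chosen [t]-minor.
    Now if [x * det A1 = 0], [y * det A2 = 0] and [x * y = 0] with [x, y]
    nonzero, the two McCoy matrices [x D] and [y E] multiply to [0] both ways,
    giving a path [A1 - xD - yE - A2] of length at most 3.  Hence, when
    [d(A1, A2) > 3], nonzero elements of [Ann (det A1)] and [Ann (det A2)] are
    never orthogonal, and since [det A2] is itself a zero-divisor, [x det A2]
    must vanish whenever [x det A1] does. *)
From Stdlib Require Import Classical.
From HB Require Import structures.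
From mathcomp Require Import all_boot all_order all_algebra.
Set Implicit Arguments. Unset Strict Implicit. Unset Printing Implicit Defensive.
Import GRing.Theory.
Local Open Scope ring_scope.

Lemma ex_transition (P : nat -> Prop) (m : nat) :
  ~ P 0 -> P m -> exists t, [/\ (t < m)%N, ~ P t & P t.+1].
Proof.
move=> nP0 Pm; apply: NNPP => no_t.
suff : forall k, (k <= m)%N -> ~ P k by move/(_ m (leqnn m)).
elim=> [|k IHk] // lt_km Pk1.
by apply: no_t; exists k; split => //; apply: IHk; apply: ltnW.
Qed.

Lemma ex_notin_codom (T U : finType) (f : T -> U) :
  injective f -> (#|T| < #|U|)%N -> exists u, u \notin codom f.
Proof.
move=> inj_f ltTU; case: (pickP [pred u | u \notin codom f]) => [u notin_u | none].
  by exists u.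
have := cardC (mem (codom f)).
by rewrite (eq_card0 none) addn0 card_codom // => eTU; rewrite eTU ltnn in ltTU.
Qed.

Section Minors.
Variables (R : comNzRingType) (n : nat).
Implicit Types (A : 'M[R]_n).

Lemma det_mxsub_neq0_injl k (f g : 'I_k -> 'I_n) A :
  \det (mxsub f g A) != 0 -> injective f.
Proof.
move=> nz i j fij; apply: contraNeq nz => neq_ij.
by apply/eqP/(determinant_alternate neq_ij) => l; rewrite !mxE fij.
Qed.

Lemma det_mxsub_neq0_injr k (f g : 'I_k -> 'I_n) A :
  \det (mxsub f g A) != 0 -> injective g.
Proof.
move=> nz i j gij; apply: contraNeq nz => neq_ij.
by rewrite -det_tr; apply/eqP/(determinant_alternate neq_ij) => l; rewrite !mxE gij.
Qed.

Definition ord_ext k (f : 'I_k -> 'I_n) (i0 : 'I_n) : 'I_k.+1 -> 'I_n :=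
  fun i => if unlift ord_max i is Some j then f j else i0.

Lemma ord_ext_lift k (f : 'I_k -> 'I_n) i0 j : ord_ext f i0 (lift ord_max j) = f j.
Proof. by rewrite /ord_ext liftK. Qed.

Lemma ord_ext_max k (f : 'I_k -> 'I_n) i0 : ord_ext f i0 ord_max = i0.
Proof. by rewrite /ord_ext unlift_none. Qed.

Lemma ord_ext_eqE k (f : 'I_k -> 'I_n) i0 i :
  i0 \notin codom f -> (ord_ext f i0 i == i0) = (i == ord_max).
Proof.
move=> fi0; rewrite /ord_ext; case: unliftP => [j ->|->]; last by rewrite !eqxx.
have := neq_lift ord_max j; rewrite eq_sym => /negbTE ->.
apply: contraNF fi0 => /eqP <-.
exact: codom_f.
Qed.

Lemma cofactor_max_mxsub_ext k (f g : 'I_k -> 'I_n) i0 j0 A :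
  cofactor (mxsub (ord_ext f i0) (ord_ext g j0) A) ord_max ord_max
  = \det (mxsub f g A).
Proof.
rewrite /cofactor -signr_odd oddD addbb expr0 mul1r; congr (\det _).
by apply/matrixP => i j; rewrite !mxE !ord_ext_lift.
Qed.

Lemma mxsub_ext_entry k (f g : 'I_k -> 'I_n) i0 j0 (M : 'M[R]_k.+1) :
  i0 \notin codom f -> j0 \notin codom g ->
  (colsub (ord_ext g j0) 1%:M *m M *m rowsub (ord_ext f i0) 1%:M) j0 i0
  = M ord_max ord_max.
Proof.
move=> fi0 gj0; rewrite mxE (bigD1 ord_max) //= [X in _ + X]big1 => [|j neq_j].
  rewrite ![X in _ * X]mxE ord_ext_max eqxx mulr1 addr0 mxE.
  rewrite (bigD1 ord_max) //= [X in _ + X]big1 => [|j neq_j].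
    by rewrite ![X in X * _]mxE ord_ext_max eqxx mul1r addr0.
  by rewrite ![X in X * _]mxE eq_sym (ord_ext_eqE _ gj0) (negbTE neq_j) mul0r.
by rewrite ![X in _ * X]mxE (ord_ext_eqE _ fi0) (negbTE neq_j) mulr0.
Qed.

Section Annihilator.
Variables (A : 'M[R]_n) (x : R).

Definition kills_minors k := forall f g : 'I_k -> 'I_n, x * \det (mxsub f g A) = 0.

Lemma kills_minors_det : x * \det A = 0 -> kills_minors n.
Proof.
move=> xA f g.
have -> : mxsub f g A = rowsub f 1%:M *m A *m colsub g 1%:M.
  by rewrite mulmx_colsub mulmx1 mul_rowsub_mx mul1mx; apply/matrixP => i j; rewrite !mxE.
by rewrite !det_mulmx !mulrA (mulrC x) -(mulrA _ x) xA mulr0 mul0r.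
Qed.

Lemma kills_minors0 : x != 0 -> ~ kills_minors 0.
Proof.
move=> nz_x kill0; have f0 : 'I_0 -> 'I_n by case.
by move: (kill0 f0 f0); rewrite det_mx00 mulr1; apply/eqP.
Qed.

Definition ord_upd m (f : 'I_m -> 'I_n) q r : 'I_m -> 'I_n :=
  fun i => if i == q then r else f i.

(* Entry [(r, q)] is [x] times the Laplace expansion along row [q] of the
   minor whose [q]-th row is replaced by row [r] of [A]. *)
Lemma kills_minors_colsub_adj m (f g : 'I_m -> 'I_n) :
  kills_minors m -> x *: (colsub g A *m \adj (mxsub f g A)) = 0.
Proof.
move=> kill; apply/matrixP => r q; rewrite !mxE.
rewrite -[RHS](kill (ord_upd f q r) g) (expand_det_row _ q); congr (_ * _).
apply: eq_bigr => p _; rewrite !mxE /ord_upd eqxx; congr (_ * (_ * \det _)).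
by apply/matrixP => i j; rewrite !mxE eq_sym (negbTE (neq_lift q i)).
Qed.

Lemma kills_minors_adj_rowsub m (f g : 'I_m -> 'I_n) :
  kills_minors m -> x *: (\adj (mxsub f g A) *m rowsub f A) = 0.
Proof.
move=> kill; apply/matrixP => p l; rewrite !mxE.
rewrite -[RHS](kill f (ord_upd g p l)) (expand_det_col _ p); congr (_ * _).
apply: eq_bigr => q _; rewrite !mxE /ord_upd eqxx mulrC; congr (_ * (_ * \det _)).
by apply/matrixP => i j; rewrite !mxE eq_sym (negbTE (neq_lift p j)).
Qed.

Lemma mccoy_annihilator : x != 0 -> x * \det A = 0 ->
  exists D : 'M_n, [/\ x *: D != 0, A *m (x *: D) = 0 & (x *: D) *m A = 0].
Proof.
move=> nz_x xA.
have [t [lt_tn not_kill_t kill_t1]] :=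
  ex_transition (kills_minors0 nz_x) (kills_minors_det xA).
have [f [g nz_fg]] : exists f g : 'I_t -> 'I_n, x * \det (mxsub f g A) != 0.
  apply: NNPP => none; apply: not_kill_t => f g; apply/eqP/negPn/negP => nz.
  by apply: none; exists f, g.
have nz_det : \det (mxsub f g A) != 0 by apply: contraNneq nz_fg => ->; rewrite mulr0.
have [i0 fi0] : exists i0, i0 \notin codom f.
  by apply: ex_notin_codom (det_mxsub_neq0_injl nz_det) _; rewrite !card_ord.
have [j0 gj0] : exists j0, j0 \notin codom g.
  by apply: ex_notin_codom (det_mxsub_neq0_injr nz_det) _; rewrite !card_ord.
pose f' := ord_ext f i0; pose g' := ord_ext g j0.
exists (colsub g' 1%:M *m \adj (mxsub f' g' A) *m rowsub f' 1%:M); split.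
- apply: contraNneq nz_fg => /matrixP/(_ j0 i0).
  by rewrite mxE mxsub_ext_entry // mxE cofactor_max_mxsub_ext mxE => ->.
- rewrite -scalemxAr !mulmxA mulmx_colsub mulmx1 scalemxAl.
  by rewrite kills_minors_colsub_adj // mul0mx.
- rewrite -scalemxAl -!mulmxA -rowsubE scalemxAr.
  by rewrite kills_minors_adj_rowsub // mulmx0.
Qed.

End Annihilator.

Lemma det_left_zdiv A (B : 'M[R]_n) : B != 0 -> A *m B = 0 ->
  exists2 y, y != 0 & \det A * y = 0.
Proof.
move=> nz_B AB.
have detB : \det A *: B = 0 by rewrite -mul_scalar_mx -mul_adj_mx -mulmxA AB mulmx0.
have [i [j nz_ij]] : exists i j, B i j != 0.
  apply: NNPP => none; apply/(negP nz_B)/eqP/matrixP => i j; rewrite mxE.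
  by apply/eqP/negPn/negP => nz; apply: none; exists i, j.
by exists (B i j) => //; move/matrixP: detB => /(_ i j); rewrite !mxE.
Qed.

End Minors.

Section Graph.
Variable S : pzRingType.
Implicit Types (x y z : S).

Lemma orth_walk_rcons x s y z :
  orth_walk x s y -> orth_adj y z -> orth_walk x (rcons s z) z.
Proof.
elim: s x => [|w s IHs] x /=; first by move=> -> yz; split.
by case=> xw wy yz; split => //; apply: IHs.
Qed.

Lemma orth_dist_le_step x y z k :
  orth_dist_le x y k -> y = z \/ orth_adj y z -> orth_dist_le x z k.+1.
Proof.
case=> s [size_s xy] [<-|yz]; first by exists s; split => //; apply: leqW.
by exists (rcons s z); split; [rewrite size_rcons | apply: orth_walk_rcons xy yz].
Qed.

Lemma orth_eq_or_adj x y : orth_vertex x -> orth_vertex y ->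
  x * y = 0 -> y * x = 0 -> x = y \/ orth_adj x y.
Proof. by move=> vx vy xy yx; case: (eqVneq x y) => [->|ne]; [left | right; split]. Qed.

Lemma orth_vertex_annihilator x y : x != 0 -> y != 0 ->
  x * y = 0 -> y * x = 0 -> orth_vertex y.
Proof. by move=> nz_x nz_y xy yx; split => //; split; exists x. Qed.

Lemma orth_dist_le3_of_annihilators x y u v :
  orth_vertex x -> orth_vertex y -> u != 0 -> v != 0 ->
  x * u = 0 -> u * x = 0 -> y * v = 0 -> v * y = 0 -> u * v = 0 -> v * u = 0 ->
  orth_dist_le x y 3.
Proof.
move=> vx vy nz_u nz_v xu ux yv vy' uv vu.
have vu' := orth_vertex_annihilator vx.1 nz_u xu ux.
have vv := orth_vertex_annihilator vy.1 nz_v yv vy'.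
apply: (orth_dist_le_step (y := v)); last exact: orth_eq_or_adj vv vy vy' yv.
apply: (orth_dist_le_step (y := u)); last exact: orth_eq_or_adj vu' vv uv vu.
apply: (orth_dist_le_step (y := x)); last exact: orth_eq_or_adj vx vu' xu ux.
by exists [::].
Qed.

End Graph.

Section Determinants.
Variables (R : comNzRingType) (n : nat).
Implicit Types (A : 'M[R]_n) (x y : R).

Lemma orth_dist_le3_of_ann_det A1 A2 x y :
  orth_vertex A1 -> orth_vertex A2 -> x != 0 -> y != 0 -> x * y = 0 ->
  Ann (\det A1) x -> Ann (\det A2) y -> orth_dist_le A1 A2 3.
Proof.
rewrite /Ann => v1 v2 nz_x nz_y xy xA1 yA2.
have [D [nz_D A1D DA1]] := mccoy_annihilator nz_x (etrans (mulrC _ _) xA1).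
have [E [nz_E A2E EA2]] := mccoy_annihilator nz_y (etrans (mulrC _ _) yA2).
have DE : (x *: D) *m (y *: E) = 0 by rewrite -scalemxAl -scalemxAr scalerA xy scale0r.
have ED : (y *: E) *m (x *: D) = 0.
  by rewrite -scalemxAl -scalemxAr scalerA mulrC xy scale0r.
exact: orth_dist_le3_of_annihilators v1 v2 nz_D nz_E A1D DA1 A2E EA2 DE ED.
Qed.

Lemma ann_det_sub A1 A2 :
  orth_vertex A2 ->
  (forall x y, x != 0 -> y != 0 -> x * y = 0 ->
     Ann (\det A1) x -> Ann (\det A2) y -> False) ->
  forall x, Ann (\det A1) x -> Ann (\det A2) x.
Proof.
rewrite /Ann => -[_ [[B [nz_B A2B]] _]] no_orth x xA1.
have [y nz_y yA2] := det_left_zdiv nz_B A2B.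
apply/eqP/negPn/negP => nz_z; apply: (no_orth _ _ nz_z nz_y) => //.
- by rewrite mulrAC yA2 mul0r.
- by rewrite /Ann mulrCA xA1 mulr0.
Qed.

End Determinants.

Theorem lemma4 (R : comNzRingType) (n : nat) (hn : (1 < n)%N)
    (A1 A2 : 'M[R]_n) :
  orth_vertex A1 -> orth_vertex A2 -> ~ orth_dist_le A1 A2 3 ->
  (forall x : R, Ann (\det A1) x <-> Ann (\det A2) x) /\
  (forall x y : R, Ann (\det A1) x -> Ann (\det A1) y ->
     x != 0 -> y != 0 -> x * y != 0).
Proof.
move=> v1 v2 far.
have no_orth12 x y : x != 0 -> y != 0 -> x * y = 0 ->
    Ann (\det A1) x -> Ann (\det A2) y -> False.
  by move=> nz_x nz_y xy xA1 yA2; apply: far; apply: orth_dist_le3_of_ann_det xy xA1 yA2.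
have no_orth21 x y : x != 0 -> y != 0 -> x * y = 0 ->
    Ann (\det A2) x -> Ann (\det A1) y -> False.
  by move=> nz_x nz_y xy xA2 yA1; apply: (no_orth12 y x) => //; rewrite mulrC.
have sub12 := ann_det_sub v2 no_orth12; have sub21 := ann_det_sub v1 no_orth21.
split=> [x | x y xA1 yA1 nz_x nz_y]; first by split; [apply: sub12 | apply: sub21].
by apply/eqP => xy; apply: (no_orth12 x y) => //; apply: sub12.
Qed.
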